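(* Let $R$ be a Noetherian ring and let $N \subsetneq M$ be finitely generated $R$-modules with $\operatorname{Ass}(M/N)=\{P_1,P_2,\dots,P_s\}$ (the $P_i$ distinct). Suppose that for each $i=1,2,\dots,s$, $Q_i$ is a $P_i$-primary component of $N$ in $M$, i.e. $Q_i\in\Lambda_{P_i}(N\subsetneq M)$. Then $N=Q_1\cap Q_2\cap\cdots\cap Q_s$, and this is an irredundant and minimal primary decomposition of $N$ in $M$.
   Context: A submodule $Q\subseteq M$ is $P$-primary if $\operatorname{Ass}(M/Q)=\{P\}$. A primary decomposition of $N$ in $M$ means an irredundant and minimal primary decomposition $N=Q_1\cap\cdots\cap Q_s$ with $Q_i$ being $P_i$-primary, the $P_i$ distinct; then $\operatorname{Ass}(M/N)=\{P_1,\dots,P_s\}$ and $Q_i$ is called a $P_i$-primary component of $N$ in $M$. For $P\in\operatorname{Ass}(M/N)$, $\Lambda_P(N\subsetneq M)$ denotes the set of all $P$-primary submodules $Q$ of $M$ that occur as the $P$-primary component in some (irredundant, minimal) primary decomposition of $N$ in $M$. *)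

From HB Require Import structures.
From mathcomp Require Import all_boot all_order all_algebra.
From mathcomp Require Import boolp classical_sets.
Set Implicit Arguments. Unset Strict Implicit. Unset Printing Implicit Defensive.
Import GRing.Theory.
Local Open Scope ring_scope.
Local Open Scope classical_set_scope.

Section Defs.
Variable R : comNzRingType.

Definition ideal (I : set R) : Prop :=
  [/\ I 0, (forall x y, I x -> I y -> I (x + y)) & (forall r x, I x -> I (r * x))].

Definition prime_ideal (P : set R) : Prop :=
  [/\ ideal P, ~ P 1 & (forall a b, P (a * b) -> P a \/ P b)].

Definition noetherian_ring : Prop :=
  forall I : set R, ideal I ->
    exists (n : nat) (g : 'I_n -> R),
      I = [set x | exists c : 'I_n -> R, x = \sum_(i < n) c i * g i].

Variable M : lmodType R.

Definition submodule (N : set M) : Prop :=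
  [/\ N 0, (forall x y, N x -> N y -> N (x + y)) & (forall r x, N x -> N (r *: x))].

(* a finitely generated submodule (A = setT : M itself is finitely generated) *)
Definition fg_submodule (A : set M) : Prop :=
  exists (n : nat) (g : 'I_n -> M),
    A = [set x | exists c : 'I_n -> R, x = \sum_(i < n) c i *: g i].

(* (N :_R m) = annihilator of the class of m in M/N *)
Definition colon (N : set M) (m : M) : set R := [set r | N (r *: m)].

(* Ass(M/N) *)
Definition Ass (N : set M) : set (set R) :=
  [set P | prime_ideal P /\ exists m : M, P = colon N m].

Definition primary_sub (P : set R) (Q : set M) : Prop :=
  submodule Q /\ Ass Q = [set P].

Definition primary_decomposition (N : set M) (s : nat)
    (Q : 'I_s -> set M) (P : 'I_s -> set R) : Prop :=
  [/\ forall i, primary_sub (P i) (Q i),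
      injective P,
      N = \bigcap_(i in [set: 'I_s]) Q i
    & forall i, \bigcap_(j in [set j | j != i]) Q j <> N].

Definition Lambda (P : set R) (N : set M) : set (set M) :=
  [set Q | exists (s : nat) (Q' : 'I_s -> set M) (P' : 'I_s -> set R),
      primary_decomposition N Q' P' /\ exists i, P' i = P /\ Q' i = Q].

End Defs.

(** Two facts about the colon ideals [(N :_R y)] drive the proof.  First, a
    prime ideal that is a finite intersection of ideals equals one of them;
    since [(Q_1 ∩ ... ∩ Q_t :_R y)] is the intersection of the [(Q_j :_R y)],
    a prime colon ideal of an intersection of primary submodules is the
    associated prime of one of them.  Second, over a Noetherian ring every
    [x ∉ N] has a multiple [r x] whose colon ideal is prime: take [r] making
    [(N :_R r x)] maximal.

    Now if [Q] is a [P]-primary component of [N] (in some decomposition) and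
    [(N :_R y) = P], the first fact applied to that decomposition gives
    [y ∉ Q].  Hence for [x ∈ Q_1 ∩ ... ∩ Q_s] outside [N], choosing [r x] with
    [(N :_R r x) = P_k] by the second fact yields [r x ∉ Q_k], which is absurd.
    Irredundancy follows from the first fact since the [P_i] are distinct. *)
From HB Require Import structures.
From mathcomp Require Import all_boot all_order all_algebra.
From mathcomp Require Import boolp classical_sets.
Set Implicit Arguments. Unset Strict Implicit. Unset Printing Implicit Defensive.
Local Open Scope ring_scope.
Local Open Scope classical_set_scope.
Import GRing.Theory.

Section ColonIdeals.
Variables (R : comNzRingType) (M : lmodType R).

Lemma ideal_sum (J : set R) n (c g : 'I_n -> R) :
  ideal J -> (forall i, J (g i)) -> J (\sum_(i < n) c i * g i).
Proof.
case=> J0 JD JZ Jg; elim/big_rec: _ => // i y _ Jy.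
by apply: JD => //; apply: JZ.
Qed.

Lemma prime_eq_bigcap (I : finType) (S : set I) (J : I -> set R) (Pr : set R) :
  prime_ideal Pr -> (forall j, ideal (J j)) -> Pr = \bigcap_(j in S) J j ->
  exists2 j, S j & Pr = J j.
Proof.
move=> [_ Pr1 Prmul] Jideal PrE; apply: contrapT => noJ.
have witness j : exists a, ~ Pr a /\ (S j -> J j a).
  have [Sj|nSj] := EM (S j); last by exists 1.
  apply: contrapT => noa; apply: noJ; exists j => //.
  apply/seteqP; split; first by rewrite PrE => a /(_ j Sj).
  by move=> a Ja; apply: contrapT => nPra; apply: noa; exists a.
have [a Ha] := choice witness.
have : ~ Pr (\prod_j a j).
  apply: (big_ind (fun x => ~ Pr x)) => // [x y Px Py /Prmul[] //|j _].
  exact: (Ha j).1.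
apply; rewrite PrE => j Sj.
have [_ _ JZ] := Jideal j.
by rewrite (bigD1 j) //= mulrC; apply: JZ; apply: (Ha j).2.
Qed.

Lemma colon_ideal (N : set M) y : submodule N -> ideal (colon N y).
Proof.
case=> N0 ND NZ; split; rewrite /colon /=.
- by rewrite scale0r.
- by move=> a b Na Nb; rewrite scalerDl; apply: ND.
- by move=> r a Na; rewrite -scalerA; apply: NZ.
Qed.

Lemma colon_bigcap (I : Type) (S : set I) (Q : I -> set M) y :
  colon (\bigcap_(j in S) Q j) y = \bigcap_(j in S) colon (Q j) y.
Proof. by []. Qed.

Lemma prime_colon_notin (N : set M) y : prime_ideal (colon N y) -> ~ N y.
Proof. by case=> _ + _; rewrite /colon /= scale1r. Qed.

Lemma prime_colon_bigcap (I : finType) (S : set I) (Q : I -> set M) y :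
  (forall j, submodule (Q j)) ->
  prime_ideal (colon (\bigcap_(j in S) Q j) y) ->
  exists2 j, S j & colon (\bigcap_(j in S) Q j) y = colon (Q j) y.
Proof.
rewrite colon_bigcap => Qsub prime_colon.
by apply: prime_eq_bigcap => // j; apply: colon_ideal.
Qed.

Lemma primary_prime (P : set R) (Q : set M) : primary_sub P Q -> prime_ideal P.
Proof. by case=> _ AssQ; have [] : Ass Q P by rewrite AssQ. Qed.

Lemma primary_colon (P : set R) (Q : set M) y :
  primary_sub P Q -> prime_ideal (colon Q y) -> colon Q y = P.
Proof.
case=> _ AssQ prime_colon.
have : Ass Q (colon Q y) by split; [|exists y].
by rewrite AssQ.
Qed.

(** The union of the chain is an ideal; its finitely many generators already
    lie in a single term. *)
Lemma noetherian_chain_stationary (J : nat -> set R) :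
  noetherian_ring R -> (forall n, ideal (J n)) -> (forall n, J n `<=` J n.+1) ->
  exists n, forall m, J m `<=` J n.
Proof.
move=> noeth Jideal Jincr.
have Jmono n m : (n <= m)%N -> J n `<=` J m.
  move=> /subnKC <-; elim: (m - n)%N => [|k IH]; first by rewrite addn0.
  by rewrite addnS => x /IH /Jincr.
pose U := [set a | exists n, J n a].
have Uideal : ideal U.
  split; first by exists 0%N; have [] := Jideal 0%N.
  - move=> a b [n Ja] [m Jb]; exists (maxn n m).
    have [_ JD _] := Jideal (maxn n m).
    by apply: JD; [apply: Jmono Ja; apply: leq_maxl|
                   apply: Jmono Jb; apply: leq_maxr].
  - by move=> r a [n Ja]; exists n; have [_ _ JZ] := Jideal n; apply: JZ.
have [k [g UE]] := noeth U Uideal.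
have gU i : U (g i).
  rewrite UE; exists (fun j => (j == i)%:R).
  rewrite (bigD1 i) //= eqxx mul1r big1 ?addr0 // => j /negbTE ->.
  by rewrite mul0r.
have [level glevel] := choice gU.
exists (\max_(i < k) level i)%N => m x Jx.
have : U x by exists m.
rewrite UE => -[c ->]; apply: ideal_sum => // i.
by apply: Jmono (glevel i); apply: (@leq_bigmax _ level i).
Qed.

Lemma noetherian_maximal (F : set (set R)) :
  noetherian_ring R -> (forall J, F J -> ideal J) -> F !=set0 ->
  exists2 J, F J & forall J', F J' -> J `<=` J' -> J' `<=` J.
Proof.
move=> noeth Fideal [J0 FJ0]; apply: contrapT => nomax.
have grow J : exists J', F J -> [/\ F J', J `<=` J' & ~ J' `<=` J].
  have [FJ|] := EM (F J); last by exists J.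
  apply: contrapT => noJ'; apply: nomax; exists J => // J' FJ' JJ'.
  by apply: contrapT => nJ'J; apply: noJ'; exists J'.
have [f fgrow] := choice grow.
pose chain n := iter n f J0.
have Fchain n : F (chain n) by elim: n => //= n /fgrow[].
have [n stat] : exists n, forall m, chain m `<=` chain n.
  apply: noetherian_chain_stationary => // n; first exact: Fideal.
  by have [] := fgrow _ (Fchain n).
by have [_ _] := fgrow _ (Fchain n); apply; apply: stat n.+1.
Qed.

Lemma colon_sub_scale (N : set M) y a :
  submodule N -> colon N y `<=` colon N (a *: y).
Proof.
by case=> _ _ NZ r; rewrite /colon /= scalerA mulrC -scalerA; apply: NZ.
Qed.

Lemma colon_maximal_prime (N : set M) y : submodule N -> ~ N y ->
  (forall a, ~ N (a *: y) -> colon N (a *: y) `<=` colon N y) ->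
  prime_ideal (colon N y).
Proof.
move=> Nsub Ny maxy; split; first exact: colon_ideal.
  by rewrite /colon /= scale1r.
move=> a b Nab; have [Nay|Nay] := EM (colon N y a); [by left|right].
by apply: (maxy a Nay); rewrite /colon /= scalerA mulrC.
Qed.

Lemma exists_prime_colon_scale (N : set M) x :
  noetherian_ring R -> submodule N -> ~ N x ->
  exists r, prime_ideal (colon N (r *: x)).
Proof.
move=> noeth Nsub Nx.
pose F := [set J | exists2 r, ~ N (r *: x) & J = colon N (r *: x)].
have [_ [r Nrx ->] maxr] :
    exists2 J, F J & forall J', F J' -> J `<=` J' -> J' `<=` J.
  apply: noetherian_maximal => //; first by move=> _ [r _ ->]; apply: colon_ideal.
  by exists (colon N x), 1; rewrite ?scale1r.
exists r; apply: colon_maximal_prime => // a Narx.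
rewrite scalerA in Narx *; apply: maxr; first by exists (a * r).
by rewrite -scalerA; apply: colon_sub_scale.
Qed.

Lemma Lambda_colon_notin (P : set R) (N Q : set M) y :
  Lambda P N Q -> colon N y = P -> ~ Q y.
Proof.
move=> [t [Q' [P' [[Q'primary P'inj NE _] [k [P'k Q'k]]]]]] colonP.
have Pprime : prime_ideal P by rewrite -P'k; apply: primary_prime (Q'primary k).
have [j _ colonQ'j] : exists2 j, [set: 'I_t] j & colon N y = colon (Q' j) y.
  rewrite NE; apply: prime_colon_bigcap => [j|]; first by case: (Q'primary j).
  by rewrite -NE colonP.
have jk : j = k.
  apply: P'inj; rewrite P'k -colonP colonQ'j; apply/esym/primary_colon => //.
  by rewrite -colonQ'j colonP.
by apply: prime_colon_notin; rewrite -Q'k -jk -colonQ'j colonP.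
Qed.

Lemma Lambda_primary (P : set R) (N Q : set M) : Lambda P N Q -> primary_sub P Q.
Proof. by move=> [t [Q' [P' [[Q'primary _ _ _] [k [<- <-]]]]]]. Qed.

Lemma Lambda_sub (P : set R) (N Q : set M) : Lambda P N Q -> N `<=` Q.
Proof. by move=> [t [Q' [P' [[_ _ -> _] [k [_ <-]]]]]] x; apply. Qed.

End ColonIdeals.

Theorem theorem1p1 (R : comNzRingType) (M : lmodType R) (N : set M)
    (s : nat) (P : 'I_s -> set R) (Q : 'I_s -> set M) :
  noetherian_ring R ->
  fg_submodule [set: M] ->
  submodule N -> fg_submodule N -> N <> [set: M] ->
  injective P ->
  Ass N = P @` [set: 'I_s] ->
  (forall i, Lambda (P i) N (Q i)) ->
  N = \bigcap_(i in [set: 'I_s]) Q i /\ primary_decomposition N Q P.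
Proof.
move=> noeth _ Nsub _ _ Pinj AssN QLambda.
have Qprimary i : primary_sub (P i) (Q i) by apply: Lambda_primary (QLambda i).
have Qsub i : submodule (Q i) by case: (Qprimary i).
have NE : N = \bigcap_(i in [set: 'I_s]) Q i.
  apply/seteqP; split=> [x Nx i _|x Qx]; first exact: Lambda_sub (QLambda i) _ Nx.
  apply: contrapT => Nx.
  have [r prime_colon] := exists_prime_colon_scale noeth Nsub Nx.
  have : Ass N (colon N (r *: x)) by split; [|exists (r *: x)].
  rewrite AssN => -[k _ colonP].
  apply: Lambda_colon_notin (QLambda k) (esym colonP) _.
  by have [_ _ QZ] := Qsub k; apply: QZ; apply: Qx.
split => //; split => // i NE'.
have [Piprime [m colonP]] : Ass N (P i) by rewrite AssN; exists i.
have [j /eqP ji colonQj] : exists2 j, [set j | j != i] j &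
    colon N m = colon (Q j) m.
  by rewrite -NE'; apply: prime_colon_bigcap; rewrite // NE' -colonP.
apply: ji; apply: Pinj; rewrite colonP colonQj; apply/esym/primary_colon => //.
by rewrite -colonQj -colonP.
Qed.
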